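(* Let $G$ be an Abelian group, $B=\{b_0,\dots,b_{q-1}\}\subseteq G$ a $B_h$ set of cardinality $q$, $b\in G$, and $n\ge1$. Then the code $$\mathcal C_n^{(G,B,b)}=\Big\{\mathbf x\in\triangle_n^{q-1}:\sum_{i=0}^{q-1}x_ib_i=b\Big\}$$ can correct $h$ deletions; in particular, if it has at least two elements then $d_1(\mathcal C_n^{(G,B,b)})>h$.
   Context: $\triangle_n^{q-1}=\{\mathbf x\in\mathbb Z^q:x_i\ge0,\sum_{i=0}^{q-1}x_i=n\}$, identified with multisets of cardinality $n$ over $[q]=\{0,\dots,q-1\}$ ($x_i$ = multiplicity of symbol $i$). $d_1(\mathbf x,\mathbf y)=\frac12\sum_i|x_i-y_i|$, $d_1(\mathcal C)$ its minimum over distinct codewords. A deletion removes one element of the multiset; a code can correct $h$ deletions if no two distinct codewords yield the same output after arbitrary patterns of at most $h$ deletions. $x_ib_i$ is the $x_i$-fold sum of $b_i$ in $G$. A set $\{b_0,\dots,b_{q-1}\}$ in an Abelian group is a $B_h$ set if the sums $b_{i_1}+\dots+b_{i_h}$, $0\le i_1\le\dots\le i_h\le q-1$, are pairwise different. *)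

From HB Require Import structures.
From mathcomp Require Import all_boot all_order all_algebra.
Set Implicit Arguments. Unset Strict Implicit. Unset Printing Implicit Defensive.
Import Order.TTheory GRing.Theory Num.Theory.

(* Multisets of cardinality n over [q] = {0,..,q-1}, as multiplicity vectors. *)
Definition simplex (q n : nat) (x : {ffun 'I_q -> nat}) : Prop :=
  (\sum_(i < q) x i)%N = n.

Definition wsum (G : zmodType) (q : nat) (b : 'I_q -> G) (x : {ffun 'I_q -> nat}) : G :=
  (\sum_(i < q) b i *+ x i)%R.

Definition Bh_set (G : zmodType) (q h : nat) (b : 'I_q -> G) : Prop :=
  forall s t : seq 'I_q,
    size s = h -> size t = h ->
    sorted (fun i j : 'I_q => (i <= j)%N) s ->
    sorted (fun i j : 'I_q => (i <= j)%N) t ->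
    (\sum_(i <- s) b i)%R = (\sum_(i <- t) b i)%R -> s = t.

Definition code (G : zmodType) (q : nat) (B : 'I_q -> G) (b : G) (n : nat)
  (x : {ffun 'I_q -> nat}) : Prop :=
  simplex n x /\ wsum B x = b.

Definition del1 (q : nat) (x y : {ffun 'I_q -> nat}) : Prop :=
  exists i : 'I_q, (0 < x i)%N /\
    y = [ffun j => if j == i then (x i).-1 else x j].

Fixpoint del_upto (q k : nat) (x y : {ffun 'I_q -> nat}) : Prop :=
  y = x \/ match k with
           | 0 => False
           | k'.+1 => exists z, del1 x z /\ del_upto k' z y
           end.

Definition corrects (q : nat) (C : {ffun 'I_q -> nat} -> Prop) (h : nat) : Prop :=
  forall x x' y, C x -> C x' -> x <> x' ->
    del_upto h x y -> del_upto h x' y -> False.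

Definition d1 (q : nat) (x y : {ffun 'I_q -> nat}) : rat :=
  ((\sum_(i < q) `|(x i)%:Z - (y i)%:Z|%N)%:R / 2)%R.

(* Two distinct codewords x, x' of the same size and weighted sum differ by the
   excesses u = (x - x')^+ and v = (x' - x)^+: these are distinct multisets of the
   same size k = d_1(x, x') with the same sum in G.  Padding both with h - k copies
   of one symbol would give two distinct h-multisets with equal sums if k <= h,
   contradicting the B_h property; hence d_1(x, x') > h.  A word y reachable from
   both x and x' by at most h deletions lies below min(x, x'), so x loses at least
   sum_i u_i = d_1(x, x') > h elements on the way to y, which is impossible. *)
From HB Require Import structures.
From mathcomp Require Import all_boot all_order all_algebra.
From mathcomp Require Import zify.
Import Order.TTheory GRing.Theory Num.Theory.

Set Implicit Arguments.
Unset Strict Implicit.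
Unset Printing Implicit Defensive.

Section Multisets.

Variable q : nat.
Implicit Types u v x y : {ffun 'I_q -> nat}.

Definition mset_seq u : seq 'I_q :=
  sort (fun i j : 'I_q => (i <= j)%N) (flatten [seq nseq (u i) i | i <- enum 'I_q]).

Lemma perm_mset_seq u :
  perm_eq (mset_seq u) (flatten [seq nseq (u i) i | i <- enum 'I_q]).
Proof. by rewrite perm_sort. Qed.

Lemma sorted_mset_seq u : sorted (fun i j : 'I_q => (i <= j)%N) (mset_seq u).
Proof. by apply: sort_sorted => i j; exact: leq_total. Qed.

Lemma count_mset_seq u i : count_mem i (mset_seq u) = u i.
Proof.
rewrite (permP (perm_mset_seq u)) count_flatten -map_comp sumnE big_map big_enum.
rewrite (bigD1 i) //= big1 => [|j /negbTE neq_ji]; last by rewrite count_nseq /= neq_ji.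
by rewrite count_nseq /= eqxx mul1n addn0.
Qed.

Lemma size_mset_seq u : size (mset_seq u) = (\sum_i u i)%N.
Proof.
rewrite size_sort size_flatten /shape -map_comp sumnE big_map big_enum.
by apply: eq_bigr => i _; rewrite /= size_nseq.
Qed.

Lemma mset_seq_inj : injective mset_seq.
Proof. by move=> u v eq_uv; apply/ffunP => i; rewrite -!count_mset_seq eq_uv. Qed.

Definition meet x y : {ffun 'I_q -> nat} := [ffun i => minn (x i) (y i)].
Definition excess x y : {ffun 'I_q -> nat} := [ffun i => x i - y i].

Lemma meetC x y : meet x y = meet y x.
Proof. by apply/ffunP => i; rewrite !ffunE minnC. Qed.

Lemma meet_excess x y : x = [ffun i => meet x y i + excess x y i].
Proof. by apply/ffunP => i; rewrite !ffunE minnE subnK ?leq_subr. Qed.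

Lemma sum_meet_excess x y :
  (\sum_i x i = \sum_i meet x y i + \sum_i excess x y i)%N.
Proof. by rewrite -big_split {1}(meet_excess x y); apply: eq_bigr => i _; rewrite ffunE. Qed.

Lemma excess_sym_eq x y : excess x y = excess y x -> x = y.
Proof.
move=> /ffunP eq_xy; apply/ffunP => i.
by have := eq_xy i; rewrite !ffunE; move: (x i) (y i) => a c; lia.
Qed.

Lemma sum_excess_sym n x y : simplex n x -> simplex n y ->
  (\sum_i excess x y i = \sum_i excess y x i)%N.
Proof.
rewrite /simplex (sum_meet_excess x y) (sum_meet_excess y x) meetC => <- /eqP.
by rewrite eqn_add2l => /eqP.
Qed.

Lemma d1_excess x y : (\sum_i excess x y i = \sum_i excess y x i)%N ->
  d1 x y = ((\sum_i excess x y i)%:R)%R.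
Proof.
move=> sym_xy; rewrite /d1.
have -> : (\sum_i absz ((x i)%:Z - (y i)%:Z)%R = (\sum_i excess x y i) * 2)%N.
  rewrite muln2 -addnn {2}sym_xy -big_split; apply: eq_bigr => i _ /=.
  rewrite !ffunE; case: (leqP (x i) (y i)) => [le_xy | /ltnW le_yx].
    by rewrite distnEr //; lia.
  by rewrite distnEl //; lia.
by rewrite natrM mulfK.
Qed.

Lemma del1_le x y : del1 x y -> (forall i, y i <= x i)%N /\ (\sum_i x i = (\sum_i y i).+1)%N.
Proof.
case=> i [x_gt0 ->]; split=> [j|]; first by rewrite ffunE; case: eqP => // ->; exact: leq_pred.
rewrite (bigD1 i) //= [in RHS](bigD1 i) //= ffunE eqxx.
rewrite [in RHS](eq_bigr x) => [|j /negbTE neq_ji]; last by rewrite ffunE neq_ji.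
by rewrite -addSn prednK.
Qed.

Lemma del_upto_le k x y :
  del_upto k x y -> (forall i, y i <= x i)%N /\ (\sum_i x i <= \sum_i y i + k)%N.
Proof.
elim: k x => [|k IHk] x /=; first by case=> // ->; rewrite addn0.
case=> [-> | [z [/del1_le [le_zx sum_xz] /IHk [le_yz sum_zy]]]].
  by split=> //; rewrite leq_addr.
split=> [i|]; first exact: leq_trans (le_yz i) (le_zx i).
by rewrite sum_xz addnS ltnS.
Qed.

Lemma sum_excess_del_upto k x x' y : del_upto k x y -> del_upto k x' y ->
  (\sum_i excess x x' i <= k)%N.
Proof.
move=> /del_upto_le [le_yx sum_xy] /del_upto_le [le_yx' _].
have le_excess : (\sum_i excess x x' i <= \sum_i excess x y i)%N.
  by apply: leq_sum => i _; rewrite !ffunE leq_sub2l.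
have sum_x : (\sum_i excess x y i + \sum_i y i = \sum_i x i)%N.
  by rewrite -big_split; apply: eq_bigr => i _ /=; rewrite ffunE subnK.
lia.
Qed.

Section Weighted.

Variables (G : zmodType) (B : 'I_q -> G).

Lemma sum_mset_seq u : (\sum_(i <- mset_seq u) B i)%R = wsum B u.
Proof.
rewrite (perm_big _ (perm_mset_seq u)) big_flatten big_map big_enum.
apply: eq_bigr => i _ /=; elim: (u i) => [|m IHm]; first by rewrite big_nil.
by rewrite big_cons IHm mulrS.
Qed.

Lemma wsumD u v : wsum B [ffun i => u i + v i] = (wsum B u + wsum B v)%R.
Proof. by rewrite /wsum -big_split; apply: eq_bigr => i _; rewrite ffunE mulrnDr. Qed.

Lemma wsum_excess_sym b n x y : code B b n x -> code B b n y ->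
  wsum B (excess x y) = wsum B (excess y x).
Proof.
case=> _ wx [_ wy]; apply: (@addrI _ (wsum B (meet x y))).
by rewrite -!wsumD -meet_excess meetC -meet_excess wx wy.
Qed.

Variable h : nat.
Hypothesis Bh : Bh_set h B.

Lemma Bh_set_wsum_inj u v : (\sum_i u i = h)%N -> (\sum_i v i = h)%N ->
  wsum B u = wsum B v -> u = v.
Proof.
move=> size_u size_v eq_w; apply: mset_seq_inj; apply: Bh.
- by rewrite size_mset_seq.
- by rewrite size_mset_seq.
- exact: sorted_mset_seq.
- exact: sorted_mset_seq.
by rewrite !sum_mset_seq.
Qed.

Lemma Bh_set_wsum_inj_le u v : (\sum_i u i = \sum_i v i)%N -> (\sum_i u i <= h)%N ->
  wsum B u = wsum B v -> u = v.
Proof.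
move=> size_uv size_u eq_w.
have [i0 _ | no_symbol] := pickP 'I_q; last by apply/ffunP => i; have := no_symbol i.
pose pad : {ffun 'I_q -> nat} := [ffun i => (i == i0) * (h - \sum_i u i)].
have size_pad : (\sum_i pad i = h - \sum_i u i)%N.
  rewrite (bigD1 i0) //= big1 => [|i /negbTE neq_i]; last by rewrite ffunE neq_i.
  by rewrite ffunE eqxx mul1n addn0.
have size_padded w : (\sum_i [ffun i => w i + pad i] i = \sum_i w i + \sum_i pad i)%N.
  by rewrite -big_split; apply: eq_bigr => i _; rewrite ffunE.
have padded : [ffun i => u i + pad i] = [ffun i => v i + pad i].
  apply: Bh_set_wsum_inj; rewrite ?wsumD ?eq_w // size_padded size_pad.
    exact: subnKC.
  by rewrite -size_uv subnKC.
by apply/ffunP => i; move/ffunP/(_ i): padded; rewrite !ffunE => /addIn.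
Qed.

Lemma sum_excess_code_gt b n x y : code B b n x -> code B b n y -> x <> y ->
  (h < \sum_i excess x y i)%N.
Proof.
move=> cx cy neq_xy; rewrite ltnNge; apply/negP => le_h; apply: neq_xy.
apply: excess_sym_eq; apply: Bh_set_wsum_inj_le => //.
  exact: sum_excess_sym (proj1 cx) (proj1 cy).
exact: wsum_excess_sym cx cy.
Qed.

End Weighted.

End Multisets.

Theorem mainTheorem13 (G : zmodType) (q h : nat) (B : 'I_q -> G) (b : G) (n : nat) :
  injective B -> Bh_set h B -> (1 <= n)%N ->
  corrects (code B b n) h /\
  (forall x y, code B b n x -> code B b n y -> x <> y ->
     (h%:R < d1 x y)%R).
Proof.
move=> _ Bh _; split.
  move=> x x' y cx cx' neq_xx' del_x del_x'.
  have := sum_excess_code_gt Bh cx cx' neq_xx'.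
  by rewrite ltnNge (sum_excess_del_upto del_x del_x').
move=> x y cx cy neq_xy.
rewrite d1_excess ?ltr_nat ?(sum_excess_code_gt Bh cx cy neq_xy) //.
exact: sum_excess_sym (proj1 cx) (proj1 cy).
Qed.
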